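(* Let $N, s \in \mathbb{N}$ with $\gcd(N, s) = 1$, and let $s'$ be the unique integer in $[1,N-1]$ with $s s'\equiv 1 \pmod N$. Let $H<P$ be natural numbers, and suppose $p_0 = sx_0 + 1$ (with $x_0$ an integer) is a divisor of $N$ lying in the interval $[P-H, P+H]$. Let $\tilde{P}$ be the unique integer in $[0,s-1]$ with $\tilde P\equiv P \pmod s$, and define $g(x) \in \mathbb{Z}[x]$ by $g(x) = x + c$, where $c$ is the unique integer in $[0,N-1]$ congruent to $s' + s'(P - \tilde{P})$ modulo $N$. Let $x' = x_0 - \frac{P - \tilde{P}}{s}$. Then: (1) $x'$ is an integer and $p_0 \mid g(x')$; (2) $|x'| \le H/s+1$. *)

From mathcomp Require Import all_boot all_order all_algebra.
Set Implicit Arguments. Unset Strict Implicit. Unset Printing Implicit Defensive.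

(* Write P - P~ = k s, so that c = s' (1 + s k) = s^-1 + k modulo N, hence modulo
   every divisor p0 of N. The integer x' = x0 - k then satisfies
   s (x' + c) = s x0 + 1 = p0 = 0 modulo p0, and p0 = s x0 + 1 is prime to s.
   For the bound, s x' = (p0 - P) + (P~ - 1) with |p0 - P| <= H and 0 <= P~ < s. *)

From mathcomp Require Import all_boot all_order all_algebra.
From mathcomp Require Import zify ring.
Set Implicit Arguments. Unset Strict Implicit. Unset Printing Implicit Defensive.

Import Order.TTheory GRing.Theory Num.Theory.
Local Open Scope ring_scope.

Lemma coprimez_mulD1 (s x : int) : coprimez (s * x + 1) s.
Proof. by apply/coprimezP; exists (1, - x) => /=; ring. Qed.

Lemma eqz_mod_divisor (p N m n : int) :
  (p %| N)%Z -> (m == n %[mod N])%Z -> (m == n %[mod p])%Z.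
Proof. by rewrite !eqz_mod_dvd; apply: dvdz_trans. Qed.

Lemma dvdz_add_modinv (p N s s' c x k : int) :
  p = s * x + 1 -> (p %| N)%Z -> (s * s' == 1 %[mod N])%Z ->
  (c == s' * (1 + s * k) %[mod N])%Z -> (p %| x - k + c)%Z.
Proof.
move=> pE pN /(eqz_mod_divisor pN) ss' /(eqz_mod_divisor pN) cE.
rewrite -(Gauss_dvdzl _ (_ : coprimez p s)); last by rewrite pE coprimez_mulD1.
have -> : (x - k + c) * s = p + s * (c - s' * (1 + s * k)) + (1 + s * k) * (s * s' - 1).
  by rewrite pE; ring.
rewrite eqz_mod_dvd in ss'; rewrite eqz_mod_dvd in cE.
by rewrite !rpredD ?dvdzz ?dvdz_mull.
Qed.

Lemma norm_intr_le_div (R : realFieldType) (z : int) (H s : nat) :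
  (0 < s)%N -> `|z * s%:Z| <= (H + s)%:Z -> `|z%:~R : R| <= H%:R / s%:R + 1.
Proof.
(* [-pmulrn] turns the casts [n%:Z%:~R] of naturals back into [n%:R]. *)
move=> s_gt0; rewrite -(ler_int R) intr_norm intrM normrM /= -!pmulrn normr_nat natrD.
by rewrite -ler_pdivlMr ?ltr0n // mulrDl divff // pnatr_eq0 -lt0n.
Qed.

Theorem claim3p3 (N s H P : nat) (s' Ptil c x0 p0 : int) :
  coprime N s ->
  (1 <= s' <= N%:Z - 1) -> (s%:Z * s' == 1 %[mod N%:Z])%Z ->
  (H < P)%N ->
  p0 = s%:Z * x0 + 1 -> (p0 %| N%:Z)%Z ->
  P%:Z - H%:Z <= p0 <= P%:Z + H%:Z ->
  (0 <= Ptil <= s%:Z - 1) -> (Ptil == P%:Z %[mod s%:Z])%Z ->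
  (0 <= c <= N%:Z - 1) -> (c == s' + s' * (P%:Z - Ptil) %[mod N%:Z])%Z ->
  let g : {poly int} := 'X + c%:P in
  let x' : rat := x0%:~R - (P%:Z - Ptil)%:~R / s%:R in
  (exists z : int, z%:~R = x' /\ (p0 %| g.[z])%Z) /\
  `|x'| <= H%:R / s%:R + 1.
Proof.
move=> _ _ ss' _ p0E p0N /andP[p0_ge p0_le] /andP[Ptil_ge0 Ptil_le] PtilE _ cE g x'.
have s_gt0 : (0 < s)%N by clear -Ptil_ge0 Ptil_le; lia.
have [k Pk] : exists k, P%:Z - Ptil = k * s%:Z.
  by apply/dvdzP; rewrite -eqz_mod_dvd eq_sym.
have x'E : x' = (x0 - k)%:~R.
  by rewrite /x' Pk intrM mulfK ?intrB // intr_eq0 -lt0n.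
split.
  exists (x0 - k); split=> //.
  rewrite /g !hornerE; apply: dvdz_add_modinv p0E p0N ss' _.
  by rewrite mulrDr mulr1 -(mulrC k) -Pk.
rewrite x'E; apply: norm_intr_le_div => //.
have -> : (x0 - k) * s%:Z = p0 - 1 - (P%:Z - Ptil) by rewrite p0E Pk; ring.
by rewrite ler_norml; apply/andP; split; clear -p0_ge p0_le Ptil_ge0 Ptil_le; lia.
Qed.
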